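(* With notation as in the context, let $s\in\{3,4,5,6,7\}$ and $s'=s+1$, and define $\psi_s(J)=\alpha_{s'}+\sum_{\beta\in J}\alpha_{h_s(\beta)}$ for $J\in\mathcal{J}(\Delta_s^+)$. Then $\psi_s$ is an isomorphism of posets from $\mathcal{J}(\Delta_s^+)$ (ordered by inclusion) onto $\Delta_{s'}^+$ when $s\le6$, and onto $\Delta_8^+\setminus\{\theta\}$ when $s=7$, where $\theta$ is the highest root of $E_8$. Moreover it is canonical: if $h:\Delta_s^+\to\{1,\dots,s\}$ is any function for which $J\mapsto\alpha_{s'}+\sum_{\beta\in J}\alpha_{h(\beta)}$ is a poset isomorphism onto the same target, then $h=h_s$.
   Context: Let $\Delta(E_8)$ be the root system of type $E_8$ with simple roots $\alpha_1,\dots,\alpha_8$, where $\langle\alpha_i,\alpha_i\rangle=2$, $\langle\alpha_i,\alpha_j\rangle=-1$ if $\{i,j\}\in\{\{1,3\},\{3,4\},\{4,5\},\{5,6\},\{6,7\},\{7,8\},\{2,4\}\}$, and $0$ otherwise; $\Delta^+$ denotes its positive roots, with $\beta=\sum\beta^i\alpha_i$, partially ordered by $\beta\le\beta'$ iff $\beta'-\beta$ is a nonnegative integer combination of simple roots. For $\beta\in\Delta^+$ let $m(\beta)=\max\{i:\beta^i\ne0\}$, and define the strata $\Delta_1^+=\{\alpha_1\}$, $\Delta_3^+=\{\beta: m(\beta)\in\{2,3\}\}$, $\Delta_s^+=\{\beta: m(\beta)=s\}$ for $4\le s\le 8$, each with the induced order. An order ideal of a poset $Y$ is a subset $J$ such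 that $x\in J$, $y\le x$ imply $y\in J$; $\mathcal{J}(Y)$ is the set of order ideals (including $\emptyset$). For $3\le s\le 8$, $\mathsf{Dyn}(E_s)$ is the graph on $v_1,\dots,v_s$ with $v_i\sim v_j$ iff $\langle\alpha_i,\alpha_j\rangle=-1$; $\mathsf{H}_s$ is the graph on $\Delta_s^+$ with $\beta\sim\beta'$ iff $\pm(\beta-\beta')$ is a simple root. An open map of graphs is a graph homomorphism that maps the neighbours of each vertex onto the neighbours of its image. For $3\le s\le7$ there is a unique function $h_s:\Delta_s^+\to\{1,\dots,s\}$ with $h_s(\alpha_s)=s$ such that $\beta\mapsto v_{h_s(\beta)}$ is an open map $\mathsf{H}_s\to\mathsf{Dyn}(E_s)$; this is the $h_s$ used in the claim. *)

From HB Require Import structures.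
From mathcomp Require Import all_boot all_order all_algebra.
From mathcomp Require Import finmap.
Set Implicit Arguments. Unset Strict Implicit. Unset Printing Implicit Defensive.
Import GRing.Theory Num.Theory.

(* Vectors of coefficients w.r.t. the simple roots alpha_1..alpha_8:
   the ordinal k : 'I_8 stands for the index k+1. *)
Definition V := {ffun 'I_8 -> nat}.

(* Edges of the E8 Dynkin diagram, 1-based indices as in the paper. *)
Definition adj (i j : nat) : bool :=
  ((i, j) \in [:: (1,3); (3,4); (4,5); (5,6); (6,7); (7,8); (2,4)])
  || ((j, i) \in [:: (1,3); (3,4); (4,5); (5,6); (6,7); (7,8); (2,4)]).

Definition cartan (i j : nat) : int :=
  if i == j then 2%R else if adj i j then (-1)%R else 0%R.

Definition form (b c : V) : int :=
  (\sum_(i < 8) \sum_(j < 8) (b i)%:Z * (c j)%:Z * cartan i.+1 j.+1)%R.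

Definition alpha (i : nat) : V := [ffun k : 'I_8 => nat_of_bool (k.+1 == i)].

Definition addv (b c : V) : V := [ffun k => b k + c k].

(* Positive roots of E8: nonzero nonnegative integer combinations of the
   simple roots of squared length 2 (E8 is simply laced). *)
Definition pos_root (b : V) : bool :=
  [exists k, b k != 0] && (form b b == 2%R).

Definition rle (b c : V) : bool := [forall k, b k <= c k].

Definition mx (b : V) : nat := \max_(k < 8 | b k != 0) k.+1.

Definition Delta (s : nat) (b : V) : bool :=
  pos_root b && (if s == 3 then (mx b == 2) || (mx b == 3) else mx b == s).

Definition is_ideal (s : nat) (J : {fset V}) : Prop :=
  (forall b, b \in J -> Delta s b) /\
  (forall b c, b \in J -> Delta s c -> rle c b -> c \in J).

Definition dyn_adj (s i j : nat) : bool :=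
  [&& 1 <= i <= s, 1 <= j <= s & adj i j].

Definition hadj (b c : V) : bool :=
  [exists k : 'I_8, (c == addv b (alpha k.+1)) || (b == addv c (alpha k.+1))].

(* h : Delta_s^+ -> {1..s} with h(alpha_s) = s, such that beta |-> v_{h beta}
   is an open map H_s -> Dyn(E_s). *)
Definition is_hs (s : nat) (h : V -> nat) : Prop :=
  [/\ h (alpha s) = s,
      (forall b, Delta s b -> 1 <= h b <= s),
      (forall b c, Delta s b -> Delta s c -> hadj b c -> dyn_adj s (h b) (h c)) &
      (forall b j, Delta s b -> dyn_adj s (h b) j ->
         exists c, [/\ Delta s c, hadj b c & h c = j])].

Definition psi (s : nat) (h : V -> nat) (J : {fset V}) : V :=
  [ffun k : 'I_8 => nat_of_bool (k.+1 == s.+1) + \sum_(b <- J) nat_of_bool (k.+1 == h b)].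

Definition is_highest (b : V) : Prop :=
  pos_root b /\ forall c, pos_root c -> rle c b.

Definition target (s : nat) (b : V) : Prop :=
  Delta s.+1 b /\ (s = 7 -> ~ is_highest b).

Definition psi_iso (s : nat) (h : V -> nat) : Prop :=
  [/\ (forall J, is_ideal s J -> target s (psi s h J)),
      (forall b, target s b -> exists J, is_ideal s J /\ psi s h J = b) &
      (forall J1 J2, is_ideal s J1 -> is_ideal s J2 ->
         (fsubset J1 J2 <-> rle (psi s h J1) (psi s h J2)))].

(* Everything is finite, so the theorem is decided by computation once the
   positive roots of E8 are known.  If a positive root b is not simple, then
   2 = <b, b> = sum_k b_k <alpha_k, b> gives some k with b_k > 0 and
   <alpha_k, b> >= 1, and since the form is positive definite b - alpha_k is
   again a positive root.  Hence closing the simple roots under adding simple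
   roots yields all positive roots.  Each stratum is then listed; order ideals
   become bit masks over that list and maps h become tables of values.  A
   pruned depth-first search finds exactly one table making beta |-> v_(h beta)
   open, exactly one table for which psi maps ideals into the target, and they
   agree; for that table psi is checked to map the ideals onto the target,
   preserving and reflecting inclusion. *)

From HB Require Import structures.
From mathcomp Require Import all_boot all_order all_algebra.
From mathcomp Require Import finmap.
From mathcomp Require Import ring zify.
Set Implicit Arguments. Unset Strict Implicit. Unset Printing Implicit Defensive.
Import GRing.Theory Num.Theory.

Definition vec_of (l : seq nat) : V := [ffun k : 'I_8 => nth 0 l k].
Definition coords (b : V) : seq nat := [seq b (inord j) | j <- iota 0 8].

Lemma size_coords b : size (coords b) = 8.
Proof. by rewrite size_map size_iota. Qed.

Lemma nth_coords b j : j < 8 -> nth 0 (coords b) j = b (inord j).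
Proof. by move=> j8; rewrite (nth_map 0) ?size_iota // nth_iota. Qed.

Lemma coordsK : cancel coords vec_of.
Proof. by move=> b; apply/ffunP => k; rewrite ffunE nth_coords // inord_val. Qed.

Lemma vec_ofK l : size l = 8 -> coords (vec_of l) = l.
Proof.
move=> l8; apply: (@eq_from_nth _ 0) => [|j]; rewrite size_coords ?l8 // => j8.
by rewrite nth_coords // ffunE inordK.
Qed.

Lemma coords_inj : injective coords.
Proof. exact: can_inj coordsK. Qed.

Lemma exists_ord8 (P : pred nat) : [exists k : 'I_8, P k] = has P (iota 0 8).
Proof.
apply/existsP/hasP => [[k Pk]|[k]]; first by exists (val k); rewrite ?mem_iota ?ltn_ord.
by rewrite mem_iota => /= k8 Pk; exists (Ordinal k8).
Qed.

Lemma forall_ord8 (P : pred nat) : [forall k : 'I_8, P k] = all P (iota 0 8).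
Proof.
apply/forallP/allP => [H k|H k]; last by apply: H; rewrite mem_iota ltn_ord.
by rewrite mem_iota => /= k8; apply: (H (Ordinal k8)).
Qed.

(** * The form and the positive roots *)

Lemma form_addvl b c d : form (addv b c) d = (form b d + form c d)%R.
Proof.
rewrite /form -big_split; apply: eq_bigr => i _; rewrite -big_split.
by apply: eq_bigr => j _; rewrite ffunE PoszD !mulrDl.
Qed.

Lemma cartan_sym i j : cartan i j = cartan j i.
Proof. by rewrite /cartan /adj eq_sym orbC. Qed.

Lemma form_sym b c : form b c = form c b.
Proof.
rewrite /form exchange_big; apply: eq_bigr => i _; apply: eq_bigr => j _.
by rewrite cartan_sym [((c i)%:Z * _)%R]mulrC.
Qed.

Lemma form_addvr b c d : form b (addv c d) = (form b c + form b d)%R.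
Proof. by rewrite form_sym form_addvl !(form_sym b). Qed.

Lemma sum_alpha_coef i (F : 'I_8 -> int) : 0 < i <= 8 ->
  (\sum_(k < 8) (alpha i k)%:Z * F k)%R = F (inord i.-1).
Proof.
case: i => // i /andP[_ i8]; rewrite (bigD1 (inord i)) //= big1 => [|k ki].
  by rewrite ffunE inordK // eqxx mul1r addr0.
rewrite ffunE eqSS (_ : (k == i :> nat) = false) ?mul0r //.
by apply: contraNF ki => /eqP <-; rewrite inord_val.
Qed.

Lemma form_alphal i c : 0 < i <= 8 ->
  form (alpha i) c = (\sum_(j < 8) (c j)%:Z * cartan i j.+1)%R.
Proof.
case: i => // i /andP[_ i8]; rewrite /form.
under eq_bigr => k _ do under eq_bigr => j _ do rewrite -mulrA.
under eq_bigr => k _ do rewrite -mulr_sumr.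
by rewrite sum_alpha_coef //= inordK.
Qed.

Lemma form_alpha i j : 0 < i <= 8 -> 0 < j <= 8 -> form (alpha i) (alpha j) = cartan i j.
Proof.
case: j => // j i8 /andP[_ j8]; rewrite form_alphal //.
under eq_bigr => k _ do rewrite cartan_sym.
by rewrite sum_alpha_coef //= inordK // cartan_sym.
Qed.

Lemma form_sum_alpha b c : form b c = (\sum_(k < 8) (b k)%:Z * form (alpha k.+1) c)%R.
Proof.
apply: eq_bigr => k _; rewrite form_alphal ?ltn_ord // mulr_sumr.
by apply: eq_bigr => j _; rewrite mulrA.
Qed.

Definition qform (l : seq nat) : int :=
  if map Posz l is [:: x0; x1; x2; x3; x4; x5; x6; x7] then
    (2 * (x0 * x0 + x1 * x1 + x2 * x2 + x3 * x3 + x4 * x4 + x5 * x5 + x6 * x6 + x7 * x7)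
     - 2 * (x0 * x2 + x2 * x3 + x3 * x4 + x4 * x5 + x5 * x6 + x6 * x7 + x1 * x3))%R
  else 0%R.

Lemma form_coords b : form b b = qform (coords b).
Proof.
rewrite -[in LHS](coordsK b); move: (coords b) (size_coords b) => l.
rewrite /form !big_ord_recl !big_ord0 !ffunE /=.
case: l => [|a0[|a1[|a2[|a3[|a4[|a5[|a6[|a7[|]]]]]]]]] // _.
by rewrite /cartan /adj /qform /=; ring.
Qed.

Lemma form_le0_eq0 b : (form b b <= 0)%R -> forall k, b k = 0.
Proof.
rewrite form_coords => Qb k; rewrite -(coordsK b) ffunE.
move: (coords b) (size_coords b) Qb.
case=> [|a0[|a1[|a2[|a3[|a4[|a5[|a6[|a7[|]]]]]]]]] // _; rewrite /qform /= => Qb.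
(* [60 * qform] is a positive combination of the squares below (an LDL^T
   decomposition of the Cartan matrix), so each of them vanishes. *)
have sq_ge0 (y : int) : (0 <= y * y)%R by nia.
have sq_eq0 (y : int) : (y * y = 0 -> y = 0)%R by move/eqP; rewrite mulf_eq0 orbb => /eqP.
move: (sq_ge0 (2 * a0%:Z - a2%:Z)%R) (sq_ge0 (2 * a1%:Z - a3%:Z)%R)
  (sq_ge0 (3 * a2%:Z - 2 * a3%:Z)%R) (sq_ge0 (5 * a3%:Z - 6 * a4%:Z)%R)
  (sq_ge0 (4 * a4%:Z - 5 * a5%:Z)%R) (sq_ge0 (3 * a5%:Z - 4 * a6%:Z)%R)
  (sq_ge0 (2 * a6%:Z - 3 * a7%:Z)%R) (sq_ge0 (Posz a7)) => s0 s1 s2 s3 s4 s5 s6 s7.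
have e0 : (2 * a0%:Z - a2%:Z = 0)%R by apply: sq_eq0; lia.
have e1 : (2 * a1%:Z - a3%:Z = 0)%R by apply: sq_eq0; lia.
have e2 : (3 * a2%:Z - 2 * a3%:Z = 0)%R by apply: sq_eq0; lia.
have e3 : (5 * a3%:Z - 6 * a4%:Z = 0)%R by apply: sq_eq0; lia.
have e4 : (4 * a4%:Z - 5 * a5%:Z = 0)%R by apply: sq_eq0; lia.
have e5 : (3 * a5%:Z - 4 * a6%:Z = 0)%R by apply: sq_eq0; lia.
have e6 : (2 * a6%:Z - 3 * a7%:Z = 0)%R by apply: sq_eq0; lia.
have e7 : Posz a7 = 0%R by apply: sq_eq0; lia.
have -> : [:: a0; a1; a2; a3; a4; a5; a6; a7] = nseq 8 0 by congr [:: _; _; _; _; _; _; _; _]; lia.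
by rewrite nth_nseq if_same.
Qed.

Definition height (b : V) : nat := \sum_(k < 8) b k.

Lemma height_alpha i : i < 8 -> height (alpha i.+1) = 1.
Proof.
move=> i8; rewrite /height (bigD1 (Ordinal i8)) //= big1 => [|k ki].
  by rewrite ffunE eqxx.
by move: ki; rewrite ffunE eqSS -val_eqE /= => /negPf ->.
Qed.

Lemma height_addv b c : height (addv b c) = height b + height c.
Proof. by rewrite /height -big_split; apply: eq_bigr => k _; rewrite ffunE. Qed.

Lemma pos_root_descent b : pos_root b ->
  (exists2 i, i < 8 & b = alpha i.+1) \/
  (exists2 i, i < 8 & exists2 c, pos_root c & b = addv c (alpha i.+1)).
Proof.
case/andP => _ /eqP form_bb.
(* [2 = form b b] is the sum of the [b k * form (alpha k.+1) b] *)
have /existsP[k /andP[bk_gt0 dk_ge1]] :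
    [exists k : 'I_8, (0 < b k) && (1 <= form (alpha k.+1) b)%R].
  apply: contraT; rewrite negb_exists => /forallP none.
  suff : (form b b <= 0)%R by rewrite form_bb.
  rewrite form_sum_alpha; apply: sumr_le0 => k _; move: (none k).
  rewrite negb_and -leqNgt leqn0 => /orP[/eqP -> | dk]; first by rewrite mul0r.
  by apply: mulr_ge0_le0; lia.
set c : V := [ffun j => b j - alpha k.+1 j].
have Eb : b = addv c (alpha k.+1).
  apply/ffunP => j; rewrite !ffunE.
  case: eqP => [[/ord_inj ->]|_] /=; [lia | by rewrite subn0 addn0].
have form_cc : form c c = (4 - 2 * form (alpha k.+1) b)%R.
  have alpha2 : form (alpha k.+1) (alpha k.+1) = 2%R by rewrite form_alpha ?ltn_ord // /cartan eqxx.
  have d_c : form (alpha k.+1) b = (form (alpha k.+1) c + 2)%R.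
    by rewrite [in LHS]Eb form_addvr alpha2.
  have : form b b = (form c c + 2 * form (alpha k.+1) c + 2)%R.
    by rewrite Eb form_addvl !form_addvr alpha2 (form_sym c (alpha _)); ring.
  by rewrite form_bb d_c; lia.
have [dk1|dk_ne1] := eqVneq (form (alpha k.+1) b) 1%R.
  right; exists k => //; exists c => //; rewrite /pos_root form_cc dk1 andbT.
  apply: contraT; rewrite negb_exists => /forallP c0.
  suff : form c c = 0%R by rewrite form_cc dk1.
  by rewrite form_sum_alpha big1 // => j _; move/negPn/eqP: (c0 j) => ->; rewrite mul0r.
left; exists k => //.
have c0 := @form_le0_eq0 c ltac:(rewrite form_cc; lia).
by rewrite Eb; apply/ffunP => j; rewrite ffunE c0.
Qed.

Definition pos_root_seq (l : seq nat) : bool := has (fun a => a != 0) l && (qform l == 2%R).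

Lemma pos_root_coords b : pos_root b = pos_root_seq (coords b).
Proof.
rewrite /pos_root /pos_root_seq form_coords has_map; congr (_ && _).
rewrite -[RHS](exists_ord8 (fun j => b (inord j) != 0)).
by apply: eq_existsb => k; rewrite inord_val.
Qed.

Definition add_simple (l : seq nat) (i : nat) : seq nat :=
  [seq nth 0 l j + (j == i) | j <- iota 0 8].
Definition alpha_seq (i : nat) : seq nat := [seq nat_of_bool (j.+1 == i) | j <- iota 0 8].

Lemma coords_alpha i : coords (alpha i) = alpha_seq i.
Proof. by apply/eq_in_map => j; rewrite mem_iota => /= j8; rewrite ffunE inordK. Qed.

Lemma coords_addv b i : i < 8 -> coords (addv b (alpha i.+1)) = add_simple (coords b) i.
Proof.
move=> i8; apply/eq_in_map => j; rewrite mem_iota => /= j8.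
by rewrite !ffunE nth_coords // inordK.
Qed.

Section RootClosure.

Variable rs : seq (seq nat).
Hypothesis alpha_seq_rs : forall i, i < 8 -> alpha_seq i.+1 \in rs.
Hypothesis rs_closed : forall l i, l \in rs -> i < 8 -> pos_root_seq (add_simple l i) ->
  add_simple l i \in rs.

Lemma pos_root_closure b : pos_root b -> coords b \in rs.
Proof.
move: {2}(height b) (leqnn (height b)) => n; elim: n b => [|n IH] b hb rb;
  case: (pos_root_descent rb) => [[i i8 ->]|[i i8 [c rc Eb]]];
  try by rewrite coords_alpha alpha_seq_rs.
  by move: hb; rewrite Eb height_addv (height_alpha i8) addn1 ltn0.
have c_rs : coords c \in rs.
  by apply: IH rc; rewrite -ltnS -addn1 -(height_alpha i8) -height_addv -Eb.
by rewrite Eb coords_addv // rs_closed // -coords_addv // -Eb -pos_root_coords.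
Qed.

End RootClosure.

Definition grow_roots (rs : seq (seq nat)) : seq (seq nat) :=
  undup (rs ++ [seq l <- [seq add_simple c i | c <- rs, i <- iota 0 8] | pos_root_seq l]).

(* The highest root has height 29, so 28 rounds of growth suffice. *)
Definition roots_seq : seq (seq nat) := iter 28 grow_roots [seq alpha_seq i.+1 | i <- iota 0 8].

Lemma alpha_seq_roots : all (fun i => alpha_seq i.+1 \in roots_seq) (iota 0 8).
Proof. by vm_compute. Qed.

Lemma roots_seq_closed :
  all (fun c => all (fun i => pos_root_seq (add_simple c i) ==> (add_simple c i \in roots_seq))
    (iota 0 8)) roots_seq.
Proof. by vm_compute. Qed.

Lemma roots_seq_complete b : pos_root b -> coords b \in roots_seq.
Proof.
apply: pos_root_closure => [i i8 | l i l_roots i8].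
  by apply: (allP alpha_seq_roots); rewrite mem_iota.
by apply/implyP; apply: (allP (allP roots_seq_closed l l_roots)); rewrite mem_iota.
Qed.

Definition mx_seq (l : seq nat) : nat :=
  foldr (fun k m => maxn (if nth 0 l k != 0 then k.+1 else 0) m) 0 (iota 0 8).

Lemma mx_coords b : mx b = mx_seq (coords b).
Proof. by rewrite /mx -{1}(coordsK b) big_mkcond !big_ord_recl big_ord0 /= !ffunE. Qed.

Definition in_stratum (s : nat) (l : seq nat) : bool :=
  pos_root_seq l && (if s == 3 then (mx_seq l == 2) || (mx_seq l == 3) else mx_seq l == s).

Definition stratum (s : nat) : seq (seq nat) := [seq l <- roots_seq | in_stratum s l].

Lemma Delta_coords s b : Delta s b = (coords b \in stratum s).
Proof.
rewrite mem_filter /Delta /in_stratum -pos_root_coords -mx_coords.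
by case: (boolP (pos_root b)) => //= /roots_seq_complete ->; rewrite andbT.
Qed.

Lemma size_roots_seq : all (fun l => size l == 8) roots_seq.
Proof. by vm_compute. Qed.

Lemma size_stratum s : {in stratum s, forall l, size l = 8}.
Proof. by move=> l; rewrite mem_filter => /andP[_ /(allP size_roots_seq) /eqP]. Qed.

Definition rle_seq (l l' : seq nat) : bool := all (fun k => nth 0 l k <= nth 0 l' k) (iota 0 8).

Lemma rle_coords b c : rle b c = rle_seq (coords b) (coords c).
Proof.
rewrite /rle /rle_seq -(forall_ord8 (fun k => nth 0 (coords b) k <= nth 0 (coords c) k)).
by apply: eq_forallb => k; rewrite !nth_coords // inord_val.
Qed.

Definition hadj_seq (l l' : seq nat) : bool :=
  has (fun k => (l' == add_simple l k) || (l == add_simple l' k)) (iota 0 8).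

Lemma hadj_coords b c : hadj b c = hadj_seq (coords b) (coords c).
Proof.
rewrite /hadj /hadj_seq -(exists_ord8 (fun k => (coords c == add_simple (coords b) k)
  || (coords b == add_simple (coords c) k))).
by apply: eq_existsb => k; rewrite -!coords_addv // !(inj_eq coords_inj).
Qed.

Definition theta_seq : seq nat := [:: 2; 3; 4; 6; 5; 4; 3; 2].

Lemma theta_seq_highest : pos_root_seq theta_seq && all (rle_seq^~ theta_seq) roots_seq.
Proof. by vm_compute. Qed.

Lemma rle_anti b c : rle b c -> rle c b -> b = c.
Proof. by move=> /forallP bc /forallP cb; apply/ffunP => k; apply/anti_leq; rewrite bc cb. Qed.

Lemma highest_coords b : is_highest b <-> coords b = theta_seq.
Proof.
have /andP[theta_root /allP theta_top] := theta_seq_highest.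
have theta_V : coords (vec_of theta_seq) = theta_seq by rewrite vec_ofK.
have below_theta c : pos_root c -> rle c (vec_of theta_seq).
  by move/roots_seq_complete/theta_top; rewrite rle_coords theta_V.
split=> [[rb b_top] | b_theta].
  rewrite -theta_V; congr coords; apply: rle_anti (below_theta _ rb) (b_top _ _).
  by rewrite pos_root_coords theta_V.
have -> : b = vec_of theta_seq by rewrite -b_theta coordsK.
by split; [rewrite pos_root_coords theta_V | exact: below_theta].
Qed.

Definition target_seq (s : nat) : seq (seq nat) :=
  if s == 7 then [seq l <- stratum 8 | l != theta_seq] else stratum s.+1.

Lemma target_coords s b : target s b <-> coords b \in target_seq s.
Proof.
rewrite /target /target_seq; case: eqP => [->|s_ne7].
  rewrite mem_filter -Delta_coords andbC; split=> [[-> not_top] | /andP[-> b_ne]] /=.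
    by apply/eqP => /highest_coords; apply: not_top.
  by split=> // _ /highest_coords b_top; rewrite b_top eqxx in b_ne.
by rewrite -Delta_coords; split=> [[] // | Db]; split=> // /s_ne7.
Qed.

(** * Exhaustive search *)

Section Extensions.

Variables (A : eqType) (vals : seq A) (ok : seq A -> bool).

Fixpoint extensions (k : nat) : seq (seq A) :=
  if k is k'.+1 then
    flatten [seq [seq rcons p v | v <- vals & ok (rcons p v)] | p <- extensions k']
  else [:: [::]].

Lemma extensions_complete m : all (mem vals) m ->
  (forall k, 0 < k <= size m -> ok (take k m)) -> m \in extensions (size m).
Proof.
elim/last_ind: m => [|p v IH]; first by rewrite inE.
rewrite all_rcons size_rcons => /andP[v_vals p_vals] ok_pv; apply/flattenP.
exists [seq rcons p v0 | v0 <- vals & ok (rcons p v0)].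
  apply: map_f; apply: IH => // k /andP[k_gt0 k_le].
  by rewrite -(takel_cat [:: v] k_le) cats1 ok_pv // k_gt0 leqW.
apply: map_f; rewrite mem_filter; apply/andP; split; last exact: v_vals.
have ok_full := ok_pv (size p).+1.
by rewrite take_oversize ?size_rcons // leqnn in ok_full; apply: ok_full.
Qed.

Lemma extensions_sound k m : m \in extensions k ->
  [/\ size m = k, all (mem vals) m & 0 < k -> ok m].
Proof.
elim: k m => [|k IH] m /=; first by rewrite inE => /eqP ->.
case/flattenP => _ /mapP[p /IH[p_size p_vals _] ->] /mapP[v].
by rewrite mem_filter => /andP[ok_pv v_vals] ->; rewrite size_rcons p_size all_rcons p_vals andbT.
Qed.

End Extensions.

Definition relation_table (r : rel (seq nat)) (D : seq (seq nat)) : seq (seq nat) :=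
  [seq [seq j <- iota 0 (size D) | r x (nth [::] D j)] | x <- D].

Lemma mem_relation_table r D i j : i < size D ->
  (j \in nth [::] (relation_table r D) i) = (j < size D) && r (nth [::] D i) (nth [::] D j).
Proof. by move=> iD; rewrite (nth_map [::]) // mem_filter mem_iota andbC. Qed.

Definition down_closed (B : seq (seq nat)) (m : bitseq) : bool :=
  all (fun i => nth false m i ==> all (fun j => (j < size m) ==> nth false m j) (nth [::] B i))
    (iota 0 (size m)).

Definition ideal_masks (D : seq (seq nat)) : seq bitseq :=
  extensions [:: false; true] (down_closed (relation_table (fun l l' => rle_seq l' l) D)) (size D).

(* [q] tabulates [h] on a prefix of the stratum list [D], and [N] lists the
   neighbours in [H_s]; openness at [i] is only checked once all neighbours of
   the [i]-th root are in the prefix. *)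
Definition open_at (s : nat) (D N : seq (seq nat)) (q : seq nat) (i : nat) : bool :=
  let hi := nth 0 q i in let Ni := nth [::] N i in
  [&& (nth [::] D i == alpha_seq s) ==> (hi == s),
      all (fun j => (j < size q) ==> dyn_adj s hi (nth 0 q j)) Ni &
      all (fun j => j < size q) Ni ==>
        all (fun v => dyn_adj s hi v ==> has (fun j => nth 0 q j == v) Ni) (iota 1 s)].

Definition open_maps (s : nat) (D : seq (seq nat)) : seq (seq nat) :=
  let N := relation_table hadj_seq D in
  extensions (iota 1 s) (fun q => all (open_at s D N q) (iota 0 (size q))) (size D).

(* [psi_seq s q m] is [psi s h J] for [q] tabulating [h] and [m] the bit mask
   of [J] on the stratum list. *)
Definition psi_seq (s : nat) (q : seq nat) (m : bitseq) : seq nat :=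
  [seq (k.+1 == s.+1) + count_mem k.+1 (mask m q) | k <- iota 0 8].

(* Ideals reaching beyond the prefix tabulated by [q] are not tested yet. *)
Definition maps_into (s : nat) (I : seq bitseq) (T : seq (seq nat)) (q : seq nat) : bool :=
  all (fun m => has id (drop (size q) m) || (psi_seq s q m \in T)) I.

Definition iso_maps (s : nat) (D T : seq (seq nat)) : seq (seq nat) :=
  extensions (iota 1 s) (maps_into s (ideal_masks D) T) (size D).

Definition mask_le (m1 m2 : bitseq) : bool :=
  all (fun i => nth false m1 i ==> nth false m2 i) (iota 0 (size m1)).

Definition psi_onto (s : nat) (D T : seq (seq nat)) (q : seq nat) : bool :=
  all (fun t => has (fun m => psi_seq s q m == t) (ideal_masks D)) T.

Definition psi_mono (s : nat) (D : seq (seq nat)) (q : seq nat) : bool :=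
  let I := ideal_masks D in
  all (fun m1 => all (fun m2 => mask_le m1 m2 == rle_seq (psi_seq s q m1) (psi_seq s q m2)) I) I.

Lemma mask_take (T : Type) k (m : bitseq) (r : seq T) :
  ~~ has id (drop k m) -> mask m (take k r) = mask m r.
Proof.
elim: m k r => [|b m IH] [|k] [|x r] //=.
  by rewrite negb_or => /andP[/negPf -> m_low]; move: (IH 0 r); rewrite drop0 take0 mask0; apply.
by move/IH ->.
Qed.

Lemma size_psi_seq s q m : size (psi_seq s q m) = 8.
Proof. by rewrite size_map size_iota. Qed.

Lemma psi_seq_take s k q m : ~~ has id (drop k m) -> psi_seq s (take k q) m = psi_seq s q m.
Proof. by move=> m_low; rewrite /psi_seq mask_take. Qed.

(** * From tables to maps on a stratum *)

Section Stratum.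

Variables (s : nat) (D T : seq (seq nat)).
Hypothesis D_size : {in D, forall l, size l = 8}.
Hypothesis uniq_D : uniq D.
Hypothesis alpha_D : alpha_seq s \in D.
Hypothesis Delta_D : forall b, Delta s b = (coords b \in D).
Hypothesis target_T : forall b, target s b <-> coords b \in T.

Local Notation n := (size D).
Local Notation DV := (map vec_of D).
Local Notation v0 := (vec_of [::]).

Lemma size_DV : size DV = n.
Proof. exact: size_map. Qed.

Lemma coords_DV i : i < n -> coords (nth v0 DV i) = nth [::] D i.
Proof. by move=> iD; rewrite (nth_map [::]) // vec_ofK // D_size // mem_nth. Qed.

Lemma uniq_DV : uniq DV.
Proof.
rewrite map_inj_in_uniq // => l l' lD l'D e.
by rewrite -(vec_ofK (D_size lD)) e vec_ofK // D_size.
Qed.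

Lemma Delta_DV b : Delta s b = (b \in DV).
Proof.
rewrite Delta_D; apply/idP/mapP => [bD | [l lD ->]]; first by exists (coords b); rewrite ?coordsK.
by rewrite vec_ofK // D_size.
Qed.

Lemma Delta_nth_DV i : i < n -> Delta s (nth v0 DV i).
Proof. by move=> iD; rewrite Delta_DV mem_nth ?size_DV. Qed.

Lemma index_DV i : i < n -> index (nth v0 DV i) DV = i.
Proof. by move=> iD; rewrite index_uniq ?size_DV ?uniq_DV. Qed.

Lemma DV_nth b : b \in DV -> exists2 i, i < n & b = nth v0 DV i.
Proof. by move=> bD; exists (index b DV); rewrite ?nth_index // -size_DV index_mem. Qed.

Lemma mem_neighbours i j : i < n ->
  (j \in nth [::] (relation_table hadj_seq D) i) = (j < n) && hadj (nth v0 DV i) (nth v0 DV j).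
Proof.
move=> iD; rewrite mem_relation_table //.
by case: ltnP => //= jD; rewrite hadj_coords !coords_DV.
Qed.

Lemma mem_below i j : i < n ->
  (j \in nth [::] (relation_table (fun l l' => rle_seq l' l) D) i)
    = (j < n) && rle (nth v0 DV j) (nth v0 DV i).
Proof.
move=> iD; rewrite mem_relation_table //.
by case: ltnP => //= jD; rewrite rle_coords !coords_DV.
Qed.

Lemma nth_take_map (f : V -> nat) k j : j < k -> j < n ->
  nth 0 (take k (map f DV)) j = f (nth v0 DV j).
Proof. by move=> jk jD; rewrite nth_take // (nth_map v0) ?size_DV. Qed.

Lemma range_table (f : V -> nat) : (forall b, Delta s b -> 1 <= f b <= s) ->
  all (mem (iota 1 s)) (map f DV).
Proof.
move=> f_range; apply/allP => _ /mapP[b bD ->]; suff : f b \in iota 1 s by [].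
by rewrite mem_iota add1n ltnS; apply: f_range; rewrite Delta_DV.
Qed.

Lemma open_maps_of_is_hs h : is_hs s h -> map h DV \in open_maps s D.
Proof.
case=> h_alpha h_range h_adj h_open.
rewrite /open_maps -[n]size_DV -(size_map h); apply: extensions_complete.
  exact: range_table.
move=> k /andP[_]; rewrite !size_map => kn; rewrite size_takel ?size_map //.
apply/allP => i; rewrite mem_iota => /andP[_ ik]; have iD := leq_trans ik kn.
apply/and3P; rewrite size_takel ?size_map //; split.
- apply/implyP => /eqP Di; rewrite nth_take_map //.
  suff -> : nth v0 DV i = alpha s by rewrite h_alpha.
  by rewrite -[LHS]coordsK coords_DV // Di -coords_alpha coordsK.
- apply/allP => j; rewrite mem_neighbours // => /andP[jD hij]; apply/implyP => jk.
  by rewrite !nth_take_map //; exact: h_adj (Delta_nth_DV iD) (Delta_nth_DV jD) hij.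
- apply/implyP => /allP Ni_k; apply/allP => v _; apply/implyP; rewrite nth_take_map // => hv.
  have [c [Dc hc <-]] := h_open _ _ (Delta_nth_DV iD) hv.
  move: Dc; rewrite Delta_DV => /DV_nth[j jD Ec].
  have jNi : j \in nth [::] (relation_table hadj_seq D) i by rewrite mem_neighbours // jD -Ec.
  apply/hasP; exists j => //.
  by rewrite nth_take_map // -?Ec //; apply: Ni_k.
Qed.

Lemma is_hs_of_open_map q : q \in open_maps s D -> is_hs s (fun b => nth 0 q (index b DV)).
Proof.
move=> /extensions_sound[q_size q_vals q_open].
have n_gt0 : 0 < n by case: (D) alpha_D.
have open_i i : i < n -> open_at s D (relation_table hadj_seq D) q i.
  by move=> iD; apply: (allP (q_open n_gt0)); rewrite mem_iota q_size.
have index_lt b : b \in DV -> index b DV < n by rewrite -size_DV index_mem.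
have alphaV : alpha s \in DV by rewrite -(coordsK (alpha s)) coords_alpha map_f.
split.
- have /and3P[/implyP + _ _] := open_i _ (index_lt _ alphaV).
  by rewrite -coords_DV ?index_lt // nth_index // coords_alpha eqxx => /(_ isT) /eqP.
- move=> b; rewrite Delta_DV => bD.
  have : nth 0 q (index b DV) \in iota 1 s by apply: (allP q_vals); rewrite mem_nth ?q_size ?index_lt.
  by rewrite mem_iota add1n ltnS.
- move=> b c; rewrite !Delta_DV => bD cD bc.
  have /and3P[_ /allP /(_ (index c DV)) + _] := open_i _ (index_lt _ bD).
  by rewrite mem_neighbours ?index_lt // !nth_index // bc q_size index_lt // => /(_ isT) /implyP; apply.
- move=> b v; rewrite Delta_DV => bD hv.
  have /and3P[_ _ /implyP nbrs_b] := open_i _ (index_lt _ bD).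
  have v_range : v \in iota 1 s.
    by case/and3P: hv => _ /andP[v_gt0 v_le] _; rewrite mem_iota add1n ltnS v_gt0.
  have /allP /(_ v v_range) /implyP /(_ hv) /hasP[j] := nbrs_b
    ltac:(by apply/allP => j; rewrite mem_neighbours ?index_lt // q_size => /andP[]).
  rewrite mem_neighbours ?index_lt // nth_index // => /andP[jD bj] /eqP qj.
  by exists (nth v0 DV j); rewrite Delta_nth_DV // index_DV.
Qed.

Definition mask_of (J : {fset V}) : bitseq := [seq b \in J | b <- DV].
Definition ideal_of (m : bitseq) : {fset V} := seq_fset tt (mask m DV).

Lemma size_mask_of J : size (mask_of J) = n.
Proof. by rewrite !size_map. Qed.

Lemma nth_mask_of J i : i < n -> nth false (mask_of J) i = (nth v0 DV i \in J).
Proof. by move=> iD; rewrite (nth_map v0) ?size_DV. Qed.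

Lemma ideal_of_sub m : {subset ideal_of m <= DV}.
Proof. by move=> b; rewrite seq_fsetE => /mem_mask. Qed.

Lemma mem_ideal_of m i : i < n -> (nth v0 DV i \in ideal_of m) = nth false m i.
Proof. by move=> iD; rewrite seq_fsetE in_mask ?uniq_DV // mem_nth ?size_DV // index_DV. Qed.

Lemma mask_of_ideal_of m : size m = n -> mask_of (ideal_of m) = m.
Proof.
move=> m_size; apply: (@eq_from_nth _ false); rewrite size_mask_of ?m_size // => i iD.
by rewrite nth_mask_of // mem_ideal_of.
Qed.

Lemma ideal_sub J : is_ideal s J -> {subset J <= DV}.
Proof. by case=> J_D _ b /J_D; rewrite Delta_DV. Qed.

Lemma ideal_masks_of_ideal J : is_ideal s J -> mask_of J \in ideal_masks D.
Proof.
case=> _ J_down; rewrite /ideal_masks -(size_mask_of J); apply: extensions_complete.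
  by apply/allP => -[].
move=> k /andP[_]; rewrite size_mask_of => kn; rewrite /down_closed size_takel ?size_mask_of //.
apply/allP => i; rewrite mem_iota => /andP[_ ik]; have iD := leq_trans ik kn.
rewrite nth_take // nth_mask_of //; apply/implyP => iJ.
apply/allP => j; rewrite mem_below // => /andP[jD ji]; apply/implyP => jk.
by rewrite nth_take // nth_mask_of //; apply: J_down iJ (Delta_nth_DV jD) ji.
Qed.

Lemma is_ideal_of_mask m : m \in ideal_masks D -> is_ideal s (ideal_of m).
Proof.
move=> /extensions_sound[m_size _ m_down].
split=> [b /ideal_of_sub | b c]; first by rewrite Delta_DV.
move=> /[dup] /ideal_of_sub /DV_nth[i iD ->]; rewrite mem_ideal_of // => mi.
rewrite Delta_DV => /DV_nth[j jD ->] ji; rewrite mem_ideal_of //.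
have /allP /(_ i) := m_down (leq_ltn_trans (leq0n i) iD).
rewrite mem_iota m_size iD mi => /(_ isT) /allP /(_ j).
by rewrite mem_below // jD ji => /(_ isT).
Qed.

Lemma psi_mask_of h J : {subset J <= DV} ->
  psi s h J = vec_of (psi_seq s (map h DV) (mask_of J)).
Proof.
move=> J_DV; apply/ffunP => k; rewrite !ffunE (nth_map 0) ?size_iota // nth_iota // add0n.
congr (_ + _); rewrite -map_mask -filter_mask count_map.
have J_filter : perm_eq J [seq b <- DV | b \in J].
  apply: uniq_perm; rewrite ?fset_uniq ?filter_uniq ?uniq_DV // => b.
  by rewrite mem_filter; case: (boolP (b \in J)) => // /J_DV ->.
rewrite -(permP J_filter) -sum1_count [RHS]big_mkcond.
by apply: eq_bigr => b _; rewrite /= eq_sym; case: eqP.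
Qed.

Lemma fsubset_mask_le J1 J2 : {subset J1 <= DV} ->
  fsubset J1 J2 = mask_le (mask_of J1) (mask_of J2).
Proof.
move=> J1_DV; apply/fsubsetP/allP => [J12 i | le12 b bJ1].
  by rewrite mem_iota size_mask_of => /andP[_ iD]; rewrite !nth_mask_of //; apply/implyP/J12.
have [i iD Eb] := DV_nth (J1_DV _ bJ1).
by have := le12 i; rewrite mem_iota size_mask_of iD !nth_mask_of // -Eb bJ1 => /(_ isT).
Qed.

Lemma psi_iso_of_iso_map h : map h DV \in iso_maps s D T ->
  psi_onto s D T (map h DV) -> psi_mono s D (map h DV) -> psi_iso s h.
Proof.
move=> /extensions_sound[q_size _ q_into] onto mono.
have n_gt0 : 0 < n by case: (D) alpha_D.
have psi_T m : m \in ideal_masks D -> psi_seq s (map h DV) m \in T.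
  move=> mI; have [m_size _ _] := extensions_sound mI.
  by have := allP (q_into n_gt0) m mI; rewrite q_size -m_size drop_size.
split.
- move=> J J_ideal; apply/target_T.
  by rewrite (psi_mask_of h (ideal_sub J_ideal)) vec_ofK ?size_psi_seq // psi_T ?ideal_masks_of_ideal.
- move=> t /target_T /(allP onto) /hasP[m mI /eqP m_t].
  have [m_size _ _] := extensions_sound mI.
  exists (ideal_of m); split; first exact: is_ideal_of_mask.
  by rewrite (psi_mask_of h (@ideal_of_sub m)) mask_of_ideal_of // m_t coordsK.
- move=> J1 J2 J1_ideal J2_ideal.
  rewrite (fsubset_mask_le _ (ideal_sub J1_ideal)) (psi_mask_of h (ideal_sub J1_ideal)).
  rewrite (psi_mask_of h (ideal_sub J2_ideal)) rle_coords.
  rewrite !vec_ofK ?size_psi_seq //.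
  have /allP /(_ _ (ideal_masks_of_ideal J1_ideal)) /allP /(_ _ (ideal_masks_of_ideal J2_ideal)) := mono.
  by move/eqP ->.
Qed.

Lemma iso_maps_of_psi_iso h : (forall b, Delta s b -> 1 <= h b <= s) -> psi_iso s h ->
  map h DV \in iso_maps s D T.
Proof.
move=> h_range [psi_target _ _].
rewrite /iso_maps -[n]size_DV -(size_map h); apply: extensions_complete.
  exact: range_table.
move=> k /andP[_]; rewrite !size_map => kn; apply/allP => m mI.
rewrite size_takel ?size_map //; case: (boolP (has id (drop k m))) => //= m_low.
have [m_size _ _] := extensions_sound mI.
have := psi_target _ (is_ideal_of_mask mI); rewrite target_T.
by rewrite (psi_mask_of h (@ideal_of_sub m)) mask_of_ideal_of // vec_ofK ?size_psi_seq // psi_seq_take.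
Qed.

Lemma psi_iso_of_tables q :
  open_maps s D = [:: q] -> iso_maps s D T = [:: q] -> psi_onto s D T q -> psi_mono s D q ->
  (exists hs, is_hs s hs) /\
  (forall hs, is_hs s hs ->
     psi_iso s hs /\
     (forall h, (forall b, Delta s b -> 1 <= h b <= s) -> psi_iso s h ->
        forall b, Delta s b -> h b = hs b)).
Proof.
move=> open_q iso_q onto_q mono_q.
split.
  by exists (fun b => nth 0 q (index b DV)); apply: is_hs_of_open_map; rewrite open_q mem_head.
move=> hs /open_maps_of_is_hs; rewrite open_q inE => /eqP hs_q; split.
  by apply: psi_iso_of_iso_map; rewrite hs_q ?iso_q ?mem_head.
move=> h h_range /(iso_maps_of_psi_iso h_range); rewrite iso_q inE -hs_q => /eqP /eq_in_map h_hs b.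
by rewrite Delta_DV; apply: h_hs.
Qed.

End Stratum.

Definition hs_table (s : nat) : seq nat := head [::] (open_maps s (stratum s)).

Lemma forall_3_7 (P : pred nat) : all P (iota 3 5) -> forall s, 3 <= s <= 7 -> P s.
Proof.
move=> /allP P37 s s37; apply: P37; rewrite mem_iota.
by case/andP: s37 => -> /=; rewrite addnC ltnS.
Qed.

Lemma uniq_stratum : forall s, 3 <= s <= 7 -> uniq (stratum s).
Proof. by apply: forall_3_7; vm_compute. Qed.

Lemma alpha_seq_stratum : forall s, 3 <= s <= 7 -> alpha_seq s \in stratum s.
Proof. by apply: forall_3_7; vm_compute. Qed.

Lemma open_maps_stratum : forall s, 3 <= s <= 7 -> open_maps s (stratum s) == [:: hs_table s].
Proof. by apply: forall_3_7; vm_compute. Qed.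

Lemma iso_maps_stratum :
  forall s, 3 <= s <= 7 -> iso_maps s (stratum s) (target_seq s) == [:: hs_table s].
Proof. by apply: forall_3_7; vm_compute. Qed.

Lemma psi_onto_stratum :
  forall s, 3 <= s <= 7 -> psi_onto s (stratum s) (target_seq s) (hs_table s).
Proof. by apply: forall_3_7; vm_compute. Qed.

Lemma psi_mono_stratum : forall s, 3 <= s <= 7 -> psi_mono s (stratum s) (hs_table s).
Proof. by apply: forall_3_7; vm_compute. Qed.

Theorem mainTheorem13 (s : nat) (hs3 : 3 <= s) (hs7 : s <= 7) :
  (exists hs, is_hs s hs) /\
  (forall hs : V -> nat, is_hs s hs ->
     psi_iso s hs /\
     (forall h : V -> nat,
        (forall b, Delta s b -> 1 <= h b <= s) ->
        psi_iso s h ->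
        forall b, Delta s b -> h b = hs b)).
Proof.
have s37 : 3 <= s <= 7 by rewrite hs3 hs7.
apply: (psi_iso_of_tables (@size_stratum s) (uniq_stratum s37) (alpha_seq_stratum s37)
  (Delta_coords s) (target_coords s)).
- exact/eqP/open_maps_stratum.
- exact/eqP/iso_maps_stratum.
- exact: psi_onto_stratum.
- exact: psi_mono_stratum.
Qed.
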